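(* Let $X$ be a separable metric space, $\mathbb P$ the completion of a Borel probability measure on $X$ restricted to the universal $\sigma$-algebra $\mathscr U(X)$, and let $A\mapsto A^\epsilon$ be a set operation on subsets of $X$ such that $A^\epsilon\in\mathscr U(X)$ whenever $A\in\mathscr U(X)$, and such that for every sequence of sets $\{A_i\}$, $$\bigcup_{i=1}^\infty A_i^\epsilon=\Big(\bigcup_{i=1}^\infty A_i\Big)^\epsilon,\qquad\bigcap_{i=1}^\infty A_i^\epsilon\supseteq\Big(\bigcap_{i=1}^\infty A_i\Big)^\epsilon.$$ Set $A^{-\epsilon}=((A^C)^\epsilon)^C$ and $R^\epsilon(A)=\int(1-\eta(x))\mathbb 1_{A^\epsilon}(x)+\eta(x)\mathbb 1_{(A^C)^\epsilon}(x)\,d\mathbb P$. Let $\{A_n\}$ be a minimizing sequence of $R^\epsilon$ for which $\liminf A_n^\epsilon\doteq\limsup A_n^\epsilon$ and $\liminf A_n^{-\epsilon}=\limsup A_n^{-\epsilon}$. Then there is a decreasing minimizing sequence $\{B_n\}$ ($B_{n+1}\subseteq B_n$) for which $\liminf B_n^\epsilon\doteq\limsup B_n^\epsilon=\limsup A_n^\epsilon$ and $\limsup B_n^{-\epsilon}\doteq\liminf B_n^{-\epsilon}\supseteq\liminf A_n^{-\epsilon}$, the last containment holding up to a $\mathbb P$-null set.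
   Context: $\mathcal D$ is a probability distribution on $X\times\{-1,+1\}$, $\eta(x)=\mathcal D(Y=+1\mid x)\in[0,1]$, $\mathbb P$ its marginal. $\mathscr U(X)$ is the intersection over all $\sigma$-finite Borel measures $\nu$ on $X$ of the $\nu$-completion $\sigma$-algebras. A minimizing sequence is $\{A_n\}\subseteq\mathscr U(X)$ with $R^\epsilon(A_n)\to\inf_{S\in\mathscr U(X)}R^\epsilon(S)$. $\limsup A_n=\bigcap_N\bigcup_{n\ge N}A_n$, $\liminf A_n=\bigcup_N\bigcap_{n\ge N}A_n$; $\doteq$ is equality up to $\mathbb P$-null sets. *)

From HB Require Import structures.
From mathcomp Require Import all_boot all_order all_algebra.
From mathcomp Require Import all_classical all_reals all_analysis.
From mathcomp Require Import measurable_realfun.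
Set Implicit Arguments. Unset Strict Implicit. Unset Printing Implicit Defensive.
Import Order.TTheory GRing.Theory Num.Theory.
Import numFieldNormedType.Exports.
Local Open Scope classical_set_scope.
Local Open Scope ring_scope.

Definition separable_space (X : ptopologicalType) : Prop :=
  exists D : set X, countable D /\ closure D = [set: X].

Definition borelType (X : ptopologicalType) : measurableType _ :=
  g_sigma_algebraType (@open X).

Definition universal {R : realType} (X : ptopologicalType) : set (set X) :=
  fun A => forall nu : {measure set (borelType X) -> \bar R},
    sigma_finite [set: borelType X] nu ->
    completed_algebra_gen nu A.

Definition univType (R : realType) (X : ptopologicalType) : measurableType _ :=
  g_sigma_algebraType (@universal R X).

Definition set_limsup {T} (A : nat -> set T) : set T :=
  \bigcap_N \bigcup_(n in [set n | (N <= n)%N]) A n.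
Definition set_liminf {T} (A : nat -> set T) : set T :=
  \bigcup_N \bigcap_(n in [set n | (N <= n)%N]) A n.

Definition neg_op {T} (op : set T -> set T) (A : set T) : set T :=
  ~` op (~` A).

Definition adv_risk {R : realType} {X : ptopologicalType}
  (P : {measure set (univType R X) -> \bar R}) (eta : X -> R)
  (op : set X -> set X) (A : set X) : \bar R :=
  (\int[P]_(x in [set: univType R X])
     ((1 - eta x)%:E * (\1_(op A) x)%:E + (eta x)%:E * (\1_(op (~` A)) x)%:E))%E.

Definition minimizing_seq {R : realType} {X : ptopologicalType}
  (P : {measure set (univType R X) -> \bar R}) (eta : X -> R)
  (op : set X -> set X) (A : nat -> set X) : Prop :=
  (forall n, @universal R X (A n)) /\
  (fun n => adv_risk P eta op (A n)) @ \oo -->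
     ereal_inf [set adv_risk P eta op S | S in @universal R X].

Definition ae_set_eq {R : realType} {X : ptopologicalType}
  (P : {measure set (univType R X) -> \bar R}) (A B : set X) : Prop :=
  P.-negligible ((A `\` B) `|` (B `\` A)).

Definition ae_subset {R : realType} {X : ptopologicalType}
  (P : {measure set (univType R X) -> \bar R}) (A B : set X) : Prop :=
  P.-negligible (A `\` B).

From HB Require Import structures.
From mathcomp Require Import all_boot all_order all_algebra.
From mathcomp Require Import all_classical all_reals all_analysis.
From mathcomp Require Import measurable_realfun.
From mathcomp Require Import lra.
Import Order.TTheory GRing.Theory Num.Theory.
Import numFieldNormedType.Exports.
Local Open Scope classical_set_scope.
Local Open Scope ring_scope.

(* Replace A_n by its tails B_n = \bigcup_(k >= n) A_k.  The B_n decrease, hence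
   so do B_n^eps = \bigcup_(k >= n) A_k^eps and B_n^-eps; for decreasing
   sequences liminf and limsup coincide, limsup B_n^eps = limsup A_n^eps, and
   A_n^-eps is contained in B_n^-eps.  For m >= n, B_n^eps is contained in
   A_m^eps \cup G_n with G_n = \bigcup_(k >= n) A_k^eps \ \bigcap_(k >= n) A_k^eps,
   and (B_n^C)^eps in (A_m^C)^eps, so R(B_n) <= R(A_m) + P(G_n); letting
   m -> oo gives R(B_n) <= inf R + P(G_n).  The G_n decrease to a subset of the
   null set limsup A_n^eps \ liminf A_n^eps, so P(G_n) -> 0. *)

Section completed_algebra_gen.
Context d (T : measurableType d) (R : realType) (mu : {measure set T -> \bar R}).

Lemma completed_algebra_genC (A : set T) :
  completed_algebra_gen mu A -> completed_algebra_gen mu (~` A).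
Proof.
move=> [B mB [N [M [mM M0 NM]]] <-].
exists (~` B `\` M); first by apply: measurableD => //; exact: measurableC.
exists (~` (B `|` N) `&` M); first by exists M; split => // x [].
apply/seteqP; split => x /=.
  by move=> [[nB nM]|[]//] [//|Nx]; apply: nM; exact: NM.
move=> nBN; have [Mx|nMx] := pselect (M x); first by right.
by left; split => // Bx; apply: nBN; left.
Qed.

Lemma completed_algebra_gen_bigcup (F : nat -> set T) :
  (forall i, completed_algebra_gen mu (F i)) ->
  completed_algebra_gen mu (\bigcup_i F i).
Proof.
move=> cF; have /choice[B hB] : forall i, exists B, measurable B /\
    exists2 N, mu.-negligible N & B `|` N = F i.
  by move=> i; have [B mB [N nN BN]] := cF i; exists B; split => //; exists N.
have /choice[N hN] : forall i, exists N, mu.-negligible N /\ B i `|` N = F i.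
  by move=> i; have [_ [N nN BN]] := hB i; exists N.
exists (\bigcup_i B i); first by apply: bigcupT_measurable => i; exact: (hB i).1.
exists (\bigcup_i N i); first by apply: negligible_bigcup => i; exact: (hN i).1.
by rewrite -bigcupU; apply: eq_bigcupr => i _; exact: (hN i).2.
Qed.

End completed_algebra_gen.

Lemma universalC (R : realType) (X : ptopologicalType) (A : set X) :
  @universal R X A -> @universal R X (~` A).
Proof. by move=> UA nu snu; apply: completed_algebra_genC; exact: UA. Qed.

Lemma universal_bigcup (R : realType) (X : ptopologicalType) (F : nat -> set X) :
  (forall i, @universal R X (F i)) -> @universal R X (\bigcup_i F i).
Proof.
by move=> UF nu snu; apply: completed_algebra_gen_bigcup => i; exact: UF.
Qed.

Section tail_sets.
Context {T : Type}.
Implicit Types (A C D : nat -> set T).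

Definition tail_union A n : set T := \bigcup_i A (n + i)%N.
Definition tail_inter A n : set T := \bigcap_i A (n + i)%N.

Lemma subset_tail_union A n m : (n <= m)%N -> A m `<=` tail_union A n.
Proof. by move=> nm x Ax; exists (m - n)%N => //; rewrite subnKC. Qed.

Lemma tail_inter_subset A n m : (n <= m)%N -> tail_inter A n `<=` A m.
Proof. by move=> nm x /(_ (m - n)%N I); rewrite subnKC. Qed.

Lemma tail_union_nonincreasing A m n :
  (m <= n)%N -> tail_union A n `<=` tail_union A m.
Proof.
by move=> mn x [i _ Ax]; exists (n - m + i)%N => //; rewrite addnA subnKC.
Qed.

Lemma tail_inter_nondecreasing A m n :
  (m <= n)%N -> tail_inter A m `<=` tail_inter A n.
Proof.
by move=> mn x Ax i _; have := Ax (n - m + i)%N I; rewrite addnA subnKC.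
Qed.

Lemma tail_union_subsetU A n m : (n <= m)%N ->
  tail_union A n `<=` A m `|` (tail_union A n `\` tail_inter A n).
Proof.
move=> nm x Ux; have [Amx|nAmx] := pselect (A m x); first by left.
by right; split => // /(tail_inter_subset _ _ _ nm).
Qed.

Lemma setC_tail_union A n :
  ~` tail_union A n = tail_inter (fun i => ~` A i) n.
Proof. exact: setC_bigcup. Qed.

Lemma set_limsup_tail_union A : set_limsup (tail_union A) = set_limsup A.
Proof.
apply/seteqP; split => x hx N _.
  have [n /= Nn [i _ Ax]] := hx N I.
  by exists (n + i)%N => //=; rewrite (leq_trans Nn) ?leq_addr.
have [n /= Nn Ax] := hx N I.
by exists n => //; apply: subset_tail_union Ax.
Qed.

Lemma bigcap_tail_gap A :
  \bigcap_n (tail_union A n `\` tail_inter A n) `<=`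
  set_limsup A `\` set_liminf A.
Proof.
move=> x gx; split.
  rewrite -set_limsup_tail_union => N _.
  by exists N => /=; [|case: (gx N I)].
move=> [N _ Ax]; have [_] := gx N I; apply => i _.
by apply: Ax; rewrite /= leq_addr.
Qed.

Lemma set_liminf_subset C D :
  (forall n, C n `<=` D n) -> set_liminf C `<=` set_liminf D.
Proof. by move=> CD x [N _ Cx]; exists N => // n /Cx; exact: CD. Qed.

Lemma set_liminf_nonincreasing C :
  (forall m n, (m <= n)%N -> C n `<=` C m) -> set_liminf C = set_limsup C.
Proof.
move=> dC; apply/seteqP; split => x.
  move=> [N _ Cx] M _; exists (maxn N M); first by rewrite /= leq_maxr.
  by apply: Cx; rewrite /= leq_maxl.
move=> Cx; exists 0%N => // n _; have [m /= nm] := Cx n I.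
exact: dC.
Qed.

End tail_sets.

Section set_operation.
Context {T : Type} {op : set T -> set T}.
Hypothesis op_bigcup : forall F : nat -> set T,
  \bigcup_i op (F i) = op (\bigcup_i F i).
Hypothesis op_bigcap : forall F : nat -> set T,
  op (\bigcap_i F i) `<=` \bigcap_i op (F i).

Lemma op_subset (S S' : set T) : S `<=` S' -> op S `<=` op S'.
Proof.
move=> SS' x opSx; pose F i := if i is 0%N then S else S'.
have -> : S' = \bigcup_i F i.
  apply/seteqP; split => [y S'y|y [[|i] _ //]]; last exact: SS'.
  by exists 1%N.
by rewrite -op_bigcup; exists 0%N.
Qed.

Lemma neg_op_subset (S S' : set T) : S `<=` S' -> neg_op op S `<=` neg_op op S'.
Proof. by move=> SS'; apply: subsetC; apply: op_subset; exact: subsetC. Qed.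

Lemma op_tail_union (A : nat -> set T) n :
  op (tail_union A n) = tail_union (op \o A) n.
Proof. by rewrite /tail_union -op_bigcup. Qed.

Lemma neg_op_subset_tail_union (A : nat -> set T) n :
  neg_op op (A n) `<=` neg_op op (tail_union A n).
Proof.
move=> x nAx; rewrite /neg_op setC_tail_union => /op_bigcap /(_ 0%N I).
by rewrite addn0.
Qed.

End set_operation.

Lemma measure_tail_gap_cvg0 d (T : measurableType d) (R : realType)
    (mu : {measure set T -> \bar R}) (C : nat -> set T) :
  (mu setT < +oo)%E -> (forall n, measurable (C n)) ->
  mu.-negligible (set_limsup C `\` set_liminf C) ->
  (fun n => mu (tail_union C n `\` tail_inter C n)) @ \oo --> 0%E.
Proof.
move=> mufin mC negC.
have mU n : measurable (tail_union C n) by exact: bigcupT_measurable.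
have mI n : measurable (tail_inter C n) by exact: bigcapT_measurable.
have mgap : measurable (\bigcap_n (tail_union C n `\` tail_inter C n)).
  by apply: bigcapT_measurable => n; exact: measurableD.
rewrite -(measure_negligible mgap (negligibleS (bigcap_tail_gap C) negC)).
apply: nonincreasing_cvg_mu => //.
- by apply: le_lt_trans mufin; apply: le_measure; rewrite ?inE //; exact: measurableD.
- by move=> n; exact: measurableD.
- move=> m n mn; apply/subsetPset; apply: setDSS.
    exact: tail_union_nonincreasing.
  exact: tail_inter_nondecreasing.
Qed.

Lemma cvge_tail_sandwich {R : realType} [a r e : nat -> \bar R] [l : \bar R] :
  (forall n, e n \is a fin_num) -> a @ \oo --> l -> e @ \oo --> 0%E ->
  (forall n, l <= r n)%E -> (forall n m, (n <= m)%N -> r n <= a m + e n)%E ->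
  r @ \oo --> l.
Proof.
move=> fin_e al e0 lr ra.
have rle n : (r n <= l + e n)%E.
  have ae : (fun m => a m + e n)%E @ \oo --> (l + e n)%E.
    by apply: cvgeD => //; [exact: fin_num_adde_defl|exact: cvg_cst].
  by apply: (cvge_to_ge ae); near=> m; apply: ra; near: m; exact: nbhs_infty_ge.
apply: (@squeeze_cvge _ _ _ _ (cst l) _ (fun n => l + e n)%E).
- by apply: nearW => n; rewrite lr rle.
- exact: cvg_cst.
- rewrite -[X in _ --> X]adde0; apply: cvgeD => //; first exact: fin_num_adde_defl.
  exact: cvg_cst.
Unshelve. all: by end_near.
Qed.

Lemma le_indic {T : Type} {R : realDomainType} (A B : set T) (x : T) :
  A `<=` B -> \1_A x <= \1_B x :> R.
Proof.
move=> AB; rewrite !indicE.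
have [/set_mem/AB/mem_set->|_] := boolP (x \in A); first by [].
by case: (x \in B) => /=; lra.
Qed.

Lemma indic_le_indicU {T : Type} {R : realDomainType} (A B C : set T) (x : T) :
  A `<=` B `|` C -> \1_A x <= \1_B x + \1_C x :> R.
Proof.
move=> ABC; rewrite !indicE.
have [/set_mem/ABC [/mem_set->|/mem_set->]|_] := boolP (x \in A);
  by case: (x \in B); case: (x \in C) => /=; lra.
Qed.

Section adversarial_risk.
Context {R : realType} {X : ptopologicalType}.
Variables (P : {measure set (univType R X) -> \bar R}) (eta : X -> R).
Variable op : set X -> set X.
Hypothesis eta01 : forall x, 0 <= eta x <= 1.
Hypothesis meta : measurable_fun [set: univType R X] eta.
Hypothesis op_universal : forall A, @universal R X A -> @universal R X (op A).

Definition adv_loss (S : set X) (x : X) : \bar R :=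
  ((1 - eta x)%:E * (\1_(op S) x)%:E + (eta x)%:E * (\1_(op (~` S)) x)%:E)%E.

Lemma adv_riskE S :
  adv_risk P eta op S = (\int[P]_(x in [set: univType R X]) adv_loss S x)%E.
Proof. by []. Qed.

Lemma adv_loss_ge0 S x : (0 <= adv_loss S x)%E.
Proof.
have /andP[e0 e1] := eta01 x.
by rewrite adde_ge0 // mule_ge0 // lee_fin ?subr_ge0 // indicE.
Qed.

Lemma measurable_adv_loss S : @universal R X S ->
  measurable_fun [set: univType R X] (adv_loss S).
Proof.
have mU A : @universal R X A -> @measurable _ (univType R X) A.
  by move=> UA; exact: sub_sigma_algebra.
move=> US; apply: emeasurable_funD; apply: emeasurable_funM;
  apply: measurableT_comp => //.
- by apply: measurable_funB => //; exact: measurable_cst.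
- by apply: measurable_indic; apply: mU; exact: op_universal.
- by apply: measurable_indic; apply: mU; apply: op_universal; exact: universalC.
Qed.

Lemma adv_loss_le S S' E x :
  op S `<=` op S' `|` E -> op (~` S) `<=` op (~` S') ->
  (adv_loss S x <= adv_loss S' x + (\1_E x)%:E)%E.
Proof.
move=> SS'E CSS'; have /andP[e0 e1] := eta01 x.
have h1 : \1_(op S) x <= \1_(op S') x + \1_E x :> R by exact: indic_le_indicU.
have h2 : \1_(op (~` S)) x <= \1_(op (~` S')) x :> R by exact: le_indic.
have [i0 i1] : 0 <= \1_E x :> R /\ 0 <= \1_(op S) x :> R by rewrite !indicE.
rewrite /adv_loss -!EFinM -!EFinD lee_fin; nra.
Qed.

Lemma adv_risk_le S S' E : @universal R X S -> @universal R X S' ->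
  @measurable _ (univType R X) E ->
  op S `<=` op S' `|` E -> op (~` S) `<=` op (~` S') ->
  (adv_risk P eta op S <= adv_risk P eta op S' + P E)%E.
Proof.
move=> US US' mE SS'E CSS'; rewrite !adv_riskE -(setIT E) -integral_indic //.
have loss0 S0 x : [set: univType R X] x -> (0 <= adv_loss S0 x)%E.
  by move=> _; exact: adv_loss_ge0.
have mE1 : measurable_fun [set: univType R X] (fun x => (\1_E x : R)%:E).
  by apply: measurableT_comp => //; exact: measurable_indic.
rewrite -ge0_integralD //; [|exact: loss0|exact: measurable_adv_loss].
apply: ge0_le_integral => //.
- exact: loss0.
- exact: measurable_adv_loss.
- by apply: emeasurable_funD => //; exact: measurable_adv_loss.
- by move=> x _; exact: adv_loss_le.
Qed.

Lemma minimizing_seq_tail_union (A : nat -> set X) :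
  (forall F : nat -> set X, \bigcup_i op (F i) = op (\bigcup_i F i)) ->
  (P setT < +oo)%E -> minimizing_seq P eta op A ->
  ae_set_eq P (set_liminf (op \o A)) (set_limsup (op \o A)) ->
  minimizing_seq P eta op (tail_union A).
Proof.
move=> op_cup PT [UA riskA] hA.
have mopA k : @measurable _ (univType R X) (op (A k)).
  by apply: sub_sigma_algebra; apply: op_universal; exact: UA.
have Pfin S : @measurable _ (univType R X) S -> P S \is a fin_num.
  move=> mS; rewrite ge0_fin_numE //; apply: le_lt_trans PT.
  by apply: le_measure; rewrite ?inE.
pose gap k := tail_union (op \o A) k `\` tail_inter (op \o A) k.
have mgap k : @measurable _ (univType R X) (gap k).
  by apply: measurableD;
    [apply: bigcupT_measurable|apply: bigcapT_measurable] => i; exact: mopA.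
have gap_cvg0 : (P \o gap) @ \oo --> 0%E.
  apply: measure_tail_gap_cvg0 => //; apply: negligibleS hA; exact: subsetUr.
have UB k : @universal R X (tail_union A k).
  by apply: universal_bigcup => i; exact: UA.
split => //; apply: (cvge_tail_sandwich _ riskA gap_cvg0).
- by move=> k; apply: Pfin; exact: mgap.
- by move=> k; apply: ereal_inf_lbound; exists (tail_union A k).
- move=> k m km; apply: adv_risk_le => //.
  + by rewrite (op_tail_union op_cup); exact: tail_union_subsetU.
  + by apply: (op_subset op_cup); apply: subsetC; exact: subset_tail_union.
Qed.

End adversarial_risk.

Lemma ae_set_eq_refl {R : realType} {X : ptopologicalType}
    (P : {measure set (univType R X) -> \bar R}) (S : set X) :
  ae_set_eq P S S.
Proof. by rewrite /ae_set_eq setDv setU0; exact: negligible_set0. Qed.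

Lemma subset_ae_subset {R : realType} {X : ptopologicalType}
    (P : {measure set (univType R X) -> \bar R}) (S S' : set X) :
  S `<=` S' -> ae_subset P S S'.
Proof. by rewrite /ae_subset -setD_eq0 => ->; exact: negligible_set0. Qed.

Theorem lemma39 (R : realType) (X : pseudoPMetricType R)
  (hX : hausdorff_space X) (sepX : separable_space X)
  (mu : probability (borelType X) R)
  (P : {measure set (univType R X) -> \bar R})
  (hPmu : forall B : set X, @measurable _ (borelType X) B ->
            P B = mu B)
  (eta : X -> R)
  (eta01 : forall x, 0 <= eta x <= 1)
  (meta : measurable_fun [set: univType R X] eta)
  (op : set X -> set X)
  (op_univ : forall A, @universal R X A -> @universal R X (op A))
  (op_cup : forall F : nat -> set X,
     \bigcup_i op (F i) = op (\bigcup_i F i))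
  (op_cap : forall F : nat -> set X,
     op (\bigcap_i F i) `<=` \bigcap_i op (F i))
  (A : nat -> set X)
  (hAmin : minimizing_seq P eta op A)
  (hA1 : ae_set_eq P (set_liminf (fun n => op (A n)))
                     (set_limsup (fun n => op (A n))))
  (hA2 : set_liminf (fun n => neg_op op (A n)) =
         set_limsup (fun n => neg_op op (A n))) :
  exists B : nat -> set X,
    minimizing_seq P eta op B /\
    (forall n, B n.+1 `<=` B n) /\
    ae_set_eq P (set_liminf (fun n => op (B n)))
                (set_limsup (fun n => op (B n))) /\
    set_limsup (fun n => op (B n)) = set_limsup (fun n => op (A n)) /\
    ae_set_eq P (set_limsup (fun n => neg_op op (B n)))
                (set_liminf (fun n => neg_op op (B n))) /\
    ae_subset P (set_liminf (fun n => neg_op op (A n)))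
                (set_liminf (fun n => neg_op op (B n))).
Proof.
pose B := tail_union A.
have Bdec m k : (m <= k)%N -> B k `<=` B m by exact: tail_union_nonincreasing.
have negBdec m k : (m <= k)%N -> neg_op op (B k) `<=` neg_op op (B m).
  by move=> mk; apply: (neg_op_subset op_cup); exact: Bdec.
have PT : (P setT < +oo)%E.
  by rewrite hPmu ?probability_setT ?ltry.
exists B; split; first exact: minimizing_seq_tail_union.
split; first by move=> k; exact: Bdec.
split.
  rewrite set_liminf_nonincreasing; first exact: ae_set_eq_refl.
  by move=> m k mk; apply: (op_subset op_cup); exact: Bdec.
split.
  by under eq_fun do rewrite (op_tail_union op_cup); exact: set_limsup_tail_union.
split; first by rewrite set_liminf_nonincreasing; [exact: ae_set_eq_refl|exact: negBdec].
apply: subset_ae_subset; apply: set_liminf_subset => k.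
exact: (neg_op_subset_tail_union op_cap).
Qed.
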